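(* For any $n\ge 1$, the degree polynomial of $(\mathsf{Tr}(n),\preccurlyeq)$ is $$\mathrm{d}_{\mathsf{Tr}(n)}(x,y)=(x+y)^{n-2}\left(x^2+(n+1)xy+y^2\right).$$
   Context: A triword of size $n$ is a word $u=u_1\cdots u_n$ with $u_i\in\{0,1,2\}$, $u_1\ne 2$, and such that $u_i=0$ implies $u_j\neq 1$ for all $j>i$; $\mathsf{Tr}(n)$ is their set, ordered componentwise ($u\preccurlyeq v$ iff $u_i\le v_i$ for all $i$). The degree polynomial is $\mathrm{d}_{\mathsf{Tr}(n)}(x,y)=\sum_{u\in\mathsf{Tr}(n)}x^{\mathrm{in}(u)}y^{\mathrm{out}(u)}$, where $\mathrm{in}(u)$ (resp. $\mathrm{out}(u)$) is the number of elements covered by (resp. covering) $u$. (For $n=1$ the formula is read as the rational expression, equal to $x+y$.) *)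

From mathcomp Require Import all_boot all_algebra.
Set Implicit Arguments. Unset Strict Implicit. Unset Printing Implicit Defensive.
Import GRing.Theory.

(* A word of size n over {0,1,2}; position i (0-based) holds u_{i+1}. *)
Definition word (n : nat) := {ffun 'I_n -> 'I_3}.

Definition is_triword (n : nat) (u : word n) : bool :=
  [forall i : 'I_n, (nat_of_ord i == 0) ==> (nat_of_ord (u i) != 2)] &&
  [forall i : 'I_n, forall j : 'I_n,
     ((i < j)%N && (nat_of_ord (u i) == 0)) ==> (nat_of_ord (u j) != 1)].

Definition leW (n : nat) (u v : word n) : bool :=
  [forall i : 'I_n, (nat_of_ord (u i) <= nat_of_ord (v i))%N].
Definition ltW (n : nat) (u v : word n) : bool := leW u v && (u != v).

Definition covers (n : nat) (u v : word n) : bool :=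
  [&& is_triword u, is_triword v, ltW u v &
      ~~ [exists w : word n, [&& is_triword w, ltW u w & ltW w v]]].

Definition indeg (n : nat) (u : word n) : nat := #|[set v : word n | covers v u]|.
Definition outdeg (n : nat) (u : word n) : nat := #|[set v : word n | covers u v]|.

Definition degpoly (R : comRingType) (n : nat) (x y : R) : R :=
  (\sum_(u : word n | is_triword u) x ^+ indeg u * y ^+ outdeg u)%R.

From mathcomp Require Import all_boot all_algebra zify ring.
Import GRing.Theory.
Set Implicit Arguments. Unset Strict Implicit. Unset Printing Implicit Defensive.

(* A cover in Tr(n) changes a single letter: if u < v are triwords, copying
   into u the letter of v at their first difference gives a triword between
   them.  Hence out(u) counts the letters that can be raised (every 0, and
   every 1 not in first position) and in(u) those that can be lowered (every 2,
   and the last 1).  Appending a letter to a triword then multiplies its weight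
   x^in y^out by x or y, which yields linear recurrences for the sums over the
   triwords with and without a letter 0; solving them gives the formula. *)

Lemma ord3P (c : 'I_3) : [\/ c = 0 :> nat, c = 1 :> nat | c = 2 :> nat].
Proof. by case: c => -[|[|[|]]] //=; constructor. Qed.

Definition letter1 : 'I_3 := @Ordinal 3 1 isT.

Lemma big_ord3 (T : Type) (idx : T) (op : Monoid.law idx) (F : 'I_3 -> T) :
  \big[op/idx]_(c < 3) F c =
  op (op (F (@Ordinal 3 0 isT)) (F letter1)) (F (@Ordinal 3 2 isT)).
Proof.
rewrite !big_ord_recr big_ord0 Monoid.mul1m /=.
by congr (op (op (F _) (F _)) (F _)); apply: val_inj.
Qed.

Section Words.
Variable n : nat.
Implicit Types (u v w : word n) (i j k : 'I_n) (a b c : 'I_3).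

Definition set_letter u i c : word n := [ffun j => if j == i then c else u j].

Lemma set_letterE u i c j : set_letter u i c j = if j == i then c else u j.
Proof. by rewrite ffunE. Qed.

Lemma set_letter_eq u i c : set_letter u i c i = c.
Proof. by rewrite set_letterE eqxx. Qed.

Lemma set_letter_ne u i c j : j != i -> set_letter u i c j = u j.
Proof. by rewrite set_letterE => /negbTE ->. Qed.

Lemma set_letter_id u i : set_letter u i (u i) = u.
Proof. by apply/ffunP => j; rewrite set_letterE; case: eqP => [->|]. Qed.

Lemma set_letter_sym u v i : u = set_letter v i (u i) -> v = set_letter u i (v i).
Proof.
move=> Eu; apply/ffunP => j; rewrite set_letterE; case: eqP => [->|/eqP ji] //.
by rewrite Eu set_letter_ne.
Qed.

Definition zero_before u i := [exists j : 'I_n, (j < i)%N && (u j == 0 :> nat)].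
Definition one_after u i := [exists j : 'I_n, (i < j)%N && (u j == 1 :> nat)].
Definition has_letter u (a : nat) := [exists i : 'I_n, u i == a :> nat].

Lemma is_triwordP u :
  reflect ((forall i, i = 0 :> nat -> u i <> 2 :> nat) /\
           (forall i j, (i < j)%N -> u i = 0 :> nat -> u j <> 1 :> nat))
          (is_triword u).
Proof.
apply: (iffP andP) => [[/forallP T0 /forallP T1]|[T0 T1]]; split.
- by move=> i /eqP i0; apply/eqP; rewrite (implyP (T0 i)).
- move=> i j ij ui0; apply/eqP; move: (T1 i) => /forallP/(_ j)/implyP; apply.
  by rewrite ij ui0 eqxx.
- by apply/forallP => i; apply/implyP => /eqP/T0/eqP.
- apply/forallP => i; apply/forallP => j; apply/implyP => /andP[ij /eqP ui0].
  exact/eqP/(T1 _ _ ij ui0).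
Qed.

Lemma zero_before_pos u i : zero_before u i -> (0 < i)%N.
Proof. by case/existsP => j /andP[ji _]; apply: leq_ltn_trans ji. Qed.

Lemma triword_zero_before u i :
  is_triword u -> zero_before u i -> ~~ one_after u i.
Proof.
case/is_triwordP => _ T1 /existsP[j /andP[ji /eqP uj0]].
apply/existsP => -[k /andP[ik /eqP uk1]].
exact: T1 j k (ltn_trans ji ik) uj0 uk1.
Qed.

Lemma triword_set_letter u i c : is_triword u ->
  is_triword (set_letter u i c) =
  [&& (c == 2 :> nat) ==> (0 < i)%N, (c == 1 :> nat) ==> ~~ zero_before u i
    & (c == 0 :> nat) ==> ~~ one_after u i].
Proof.
case/is_triwordP => U0 U1; apply/is_triwordP/and3P => [[T0 T1]|[c2 c1 c0]].
  split; apply/implyP => /eqP ci.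
  - by rewrite lt0n; apply/eqP => i0; apply: T0 i0 _; rewrite set_letter_eq.
  - apply/existsP => -[j /andP[ji /eqP uj0]].
    have ij : j != i by rewrite neq_ltn ji.
    by apply: T1 ji _ _; rewrite ?set_letter_eq ?set_letter_ne.
  - apply/existsP => -[k /andP[ik /eqP uk1]].
    have ki : k != i by rewrite neq_ltn ik orbT.
    by apply: T1 ik _ _; rewrite ?set_letter_eq ?set_letter_ne.
split=> [j j0|j k jk].
  rewrite set_letterE; case: eqP => [ji c2'|_]; last exact: U0.
  by move: c2; rewrite c2' -ji j0.

rewrite !set_letterE; case: eqP => [ji|/eqP ji]; case: eqP => [ki|/eqP ki].
- by move: jk; rewrite ji ki ltnn.
- move=> /eqP/(implyP c0)/existsP not_one uk1; apply: not_one.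
  by exists k; rewrite -ji jk uk1 /=.
- move=> uj0 /eqP/(implyP c1)/existsP; apply.
  by exists j; rewrite -ki jk uj0 /=.
- exact: U1.
Qed.

Lemma leWP u v : reflect (forall i, (u i <= v i)%N) (leW u v).
Proof. exact: forallP. Qed.

Lemma leW_set_letter u i a b : leW (set_letter u i a) (set_letter u i b) = (a <= b)%N.
Proof.
apply/leWP/idP => [/(_ i)|ab j]; first by rewrite !set_letter_eq.
by rewrite !set_letterE; case: eqP.
Qed.

Lemma set_letter_inj u i a b : (set_letter u i a == set_letter u i b) = (a == b).
Proof.
apply/eqP/eqP => [/(congr1 (fun w : word n => w i))|->] //.
by rewrite !set_letter_eq.
Qed.

Lemma between_set_letter u i a b w :
  leW (set_letter u i a) w -> leW w (set_letter u i b) -> w = set_letter u i (w i).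
Proof.
move=> /leWP aw /leWP wb; apply/ffunP => j; rewrite set_letterE.
case: eqP => [->|/eqP ji] //; apply/val_inj/eqP.
by rewrite eqn_leq; have := aw j; have := wb j; rewrite !set_letter_ne // => -> ->.
Qed.

Lemma ltW_set_letter u i a b : ltW (set_letter u i a) (set_letter u i b) = (a < b)%N.
Proof. by rewrite /ltW leW_set_letter set_letter_inj ltn_neqAle andbC. Qed.

(* Inside one letter, the only chain that can be refined is 0 < 1 < 2. *)
Lemma covers_set_letter u i a b :
  covers (set_letter u i a) (set_letter u i b) =
  [&& is_triword (set_letter u i a), is_triword (set_letter u i b), (a < b)%N &
      ~~ [&& a == 0 :> nat, b == 2 :> nat & is_triword (set_letter u i letter1)]].
Proof.
rewrite /covers ltW_set_letter; do 3 congr andb; congr negb.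
apply/existsP/and3P => [[w /and3P[Tw aw wb]]|[a0 b2 T1]].
  have Ew := between_set_letter (andP aw).1 (andP wb).1.
  rewrite Ew !ltW_set_letter in aw wb.
  have w1 : w i = letter1 by apply: val_inj => /=; move: aw wb (ltn_ord b); lia.
  by rewrite -w1 -Ew Tw; split => //; apply/eqP; move: aw wb (ltn_ord b); lia.
by exists (set_letter u i letter1); rewrite T1 !ltW_set_letter (eqP a0) (eqP b2).
Qed.

Lemma triword_set_letter_first_diff u v i :
  is_triword u -> is_triword v -> leW u v -> (forall j, (j < i)%N -> u j = v j) ->
  is_triword (set_letter u i (v i)).
Proof.
move=> Tu Tv /leWP uv agree; have [V0 V1] := is_triwordP _ Tv.
rewrite triword_set_letter //; apply/and3P; split; apply/implyP => /eqP vi.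
- by rewrite lt0n; apply/eqP => i0; exact: V0 i0 vi.
- apply/existsP => -[j /andP[ji /eqP uj0]].
  by apply: (V1 _ _ ji _ vi); rewrite -agree.
- have ui0 : u i = 0 :> nat by apply/eqP; rewrite -leqn0; move: (uv i); rewrite vi.
  apply/existsP => -[k /andP[ik /eqP uk1]].
  by case/is_triwordP: Tu => _ U1; exact: U1 ik ui0 uk1.
Qed.

Lemma covers_one_letter u v : covers u v -> exists i, v = set_letter u i (v i).
Proof.
case/and4P => Tu Tv /andP[uv neq_uv] /existsPn between.
have [i0 diff_i0] : exists i, u i != v i.
  by apply/existsP; apply: contraR neq_uv => /existsPn same; apply/eqP/ffunP => i;
     apply/eqP/negPn/same.
case: (@arg_minnP _ i0 (fun i => u i != v i) val diff_i0) => i diff_i first_i.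
have agree j : (j < i)%N -> u j = v j.
  by move=> ji; apply/eqP; apply: contraTT ji => /first_i; rewrite -leqNgt.
have lt_ui : (u i < v i)%N by rewrite ltn_neqAle (leWP _ _ uv) andbT.
exists i; apply/eqP; rewrite eq_sym; apply: contraNT (between (set_letter u i (v i))) => ne.
rewrite triword_set_letter_first_diff // -[u in ltW u _](set_letter_id u i).
rewrite ltW_set_letter lt_ui /=.
rewrite /ltW ne andbT; apply/leWP => j; rewrite set_letterE.
by case: eqP => [->|_] //; exact: (leWP _ _ uv).
Qed.

Lemma covers_irrefl u : covers u u = false.
Proof. by rewrite /covers /ltW eqxx !andbF. Qed.

Lemma card_one_letter_changes u (P : pred (word n)) :
  ~~ P u -> (forall v, P v -> exists i, v = set_letter u i (v i)) ->
  #|[set v | P v]| = \sum_i \sum_(c < 3) P (set_letter u i c).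
Proof.
move=> Pu single.
have -> : [set v | P v] =
          [set set_letter u p.1 p.2 | p in [set p : 'I_n * 'I_3 | P (set_letter u p.1 p.2)]].
  apply/setP => v; rewrite inE; apply/idP/imsetP => [Pv|[[i c] /[!inE] Pic ->] //].
  by have [i Ev] := single v Pv; exists (i, v i); rewrite // inE -Ev.
rewrite card_in_imset; last first.
  move=> [i a] [j b] /[!inE] /= Pia Pjb E.
  have ne_ui : a != u i by apply: contraNneq Pu => a_ui; rewrite -(set_letter_id u i) -a_ui.
  have ij : i = j.
    apply/eqP; apply: contraNT ne_ui => ij.
    by rewrite -(set_letter_eq u i a) E set_letter_ne.
  by move: E; rewrite -ij => /eqP; rewrite set_letter_inj => /eqP ->.
rewrite pair_big /= -sum1dep_card big_mkcond /=.
by apply: eq_bigr => p _; case: (P _).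
Qed.

Lemma count_upper_covers_at u i : is_triword u ->
  \sum_(c < 3) covers u (set_letter u i c) =
  (u i == 0 :> nat) || (u i == 1 :> nat) && (0 < i)%N.
Proof.
move=> Tu.
have E c : covers u (set_letter u i c) = covers (set_letter u i (u i)) (set_letter u i c).
  by rewrite set_letter_id.
rewrite big_ord3 !E !covers_set_letter set_letter_id Tu !triword_set_letter //=.
(* A 0 is raised to 1 if no 0 precedes it, and to 2 otherwise. *)
case zb: (zero_before u i); first rewrite (zero_before_pos zb).
  by case: (ord3P (u i)) => ->; rewrite andbF.
by case: (ord3P (u i)) => ->; rewrite andbF //=; case: (0 < i)%N.
Qed.

Lemma count_lower_covers_at u i : is_triword u ->
  \sum_(c < 3) covers (set_letter u i c) u =
  (u i == 2 :> nat) + ((u i == 1 :> nat) && ~~ one_after u i).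
Proof.
move=> Tu.
have E c : covers (set_letter u i c) u = covers (set_letter u i c) (set_letter u i (u i)).
  by rewrite set_letter_id.
rewrite big_ord3 !E !covers_set_letter set_letter_id Tu !triword_set_letter //=.
(* A 2 is lowered to 1 if no 0 precedes it, and to 0 otherwise. *)
case zb: (zero_before u i); first rewrite (negbTE (triword_zero_before Tu zb)).
  by case: (ord3P (u i)) => ->; rewrite ?andbF.
by case: (ord3P (u i)) => ->; rewrite ?andbF //=; case: (one_after u i).
Qed.

Lemma sum_last_one u :
  \sum_i ((u i == 1 :> nat) && ~~ one_after u i) = has_letter u 1.
Proof.
case: (boolP (has_letter u 1)) => [/existsP[i0 ui0_1]|/existsPn no1]; last first.
  by rewrite big1 // => i _; rewrite (negbTE (no1 i)).
case: (@arg_maxnP _ i0 (fun i => u i == 1 :> nat) val ui0_1) => i ui1 last_i.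
rewrite (bigD1 i) //= ui1 big1 ?addn0 => [|j ji].
  suff /negbTE-> : ~~ one_after u i by [].
  apply/existsPn => j; apply/negP => /andP[ij /last_i ji].
  by move: (leq_trans ij ji); rewrite ltnn.
case: (boolP (u j == 1 :> nat)) => //= uj1; suff -> : one_after u j by [].
by apply/existsP; exists i; rewrite ui1 andbT ltn_neqAle (last_i j uj1 : (j <= i)%N) andbT.
Qed.

Lemma outdegE u : is_triword u ->
  outdeg u = \sum_i ((u i == 0 :> nat) || (u i == 1 :> nat) && (0 < i)%N).
Proof.
move=> Tu; rewrite /outdeg (@card_one_letter_changes u (covers u)) ?covers_irrefl //.
  by apply: eq_bigr => i _; exact: count_upper_covers_at.
exact: covers_one_letter.
Qed.

Lemma indegE u : is_triword u -> indeg u = \sum_i (u i == 2 :> nat) + has_letter u 1.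
Proof.
move=> Tu; rewrite /indeg (@card_one_letter_changes u (fun v => covers v u)) ?covers_irrefl //.
  by rewrite -sum_last_one -big_split; apply: eq_bigr => i _; exact: count_lower_covers_at.
by move=> v /covers_one_letter[i Eu]; exists i; exact: set_letter_sym.
Qed.

End Words.

Lemma big_ord_lift_max (T : Type) (idx : T) (op : Monoid.law idx) n (F : 'I_n.+1 -> T) :
  \big[op/idx]_(i < n.+1) F i = op (\big[op/idx]_(j < n) F (lift ord_max j)) (F ord_max).
Proof.
rewrite big_ord_recr; congr (op _ _); apply: eq_bigr => j _; congr F.
by apply: ord_inj; rewrite lift_max.
Qed.

Section Snoc.
Variable n : nat.
Implicit Types (u : word n) (c : 'I_3).

Definition snoc u c : word n.+1 :=
  [ffun i => if unlift ord_max i is Some j then u j else c].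

Lemma snoc_lift u c j : snoc u c (lift ord_max j) = u j.
Proof. by rewrite ffunE liftK. Qed.

Lemma snoc_max u c : snoc u c ord_max = c.
Proof. by rewrite ffunE unlift_none. Qed.

Lemma big_snoc (T : Type) (idx : T) (op : Monoid.com_law idx) (F : word n.+1 -> T) :
  \big[op/idx]_v F v = \big[op/idx]_u \big[op/idx]_(c < 3) F (snoc u c).
Proof.
rewrite pair_big /= (reindex (fun p : word n * 'I_3 => snoc p.1 p.2)) /=.
  by apply: eq_bigl.
exists (fun v => ([ffun j => v (lift ord_max j)], v ord_max)) => [[u c] _ | v _] /=.
  by rewrite snoc_max; congr pair; apply/ffunP => j; rewrite ffunE snoc_lift.
apply/ffunP => i; case: (unliftP ord_max i) => [j ->|->];
  by rewrite ?snoc_lift ?snoc_max ?ffunE.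
Qed.

Lemma has_letter_snoc u c a : has_letter (snoc u c) a = has_letter u a || (c == a :> nat).
Proof.
apply/existsP/orP => [[i]|[/existsP[j uj]|ca]].
- by case: (unliftP ord_max i) => [j ->|->]; rewrite ?snoc_lift ?snoc_max;
    [left; apply/existsP; exists j | right].
- by exists (lift ord_max j); rewrite snoc_lift.
- by exists ord_max; rewrite snoc_max.
Qed.

Lemma triword_snoc u c :
  is_triword (snoc u c) =
  [&& is_triword u, (n == 0) ==> (c != 2 :> nat) & (c == 1 :> nat) ==> ~~ has_letter u 0].
Proof.
apply/is_triwordP/and3P => [[T0 T1]|[/is_triwordP[U0 U1] c2 c1]].
  split.
  - apply/is_triwordP; split=> [j j0|j k jk].
      by rewrite -(snoc_lift u c); apply: T0; rewrite lift_max.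
    by rewrite -!(snoc_lift u c); apply: T1; rewrite !lift_max.
  - by apply/implyP => /eqP n0; apply/eqP; rewrite -(snoc_max u c); exact: T0.
  - apply/implyP => /eqP c_1; apply/existsP => -[j /eqP uj0].
    by apply: (T1 (lift ord_max j) ord_max); rewrite ?snoc_lift ?snoc_max ?lift_max.
split=> [i i0|i k ik].
  case: (unliftP ord_max i) i0 => [j ->|->]; rewrite ?snoc_lift ?snoc_max ?lift_max.
    exact: U0.
  by move=> /eqP n0 /eqP; apply/negP; rewrite (implyP c2).
case: (unliftP ord_max i) ik => [j ->|->]; case: (unliftP ord_max k) => [l ->|->];
  rewrite ?snoc_lift ?snoc_max ?lift_max ?ltnn // => jl.
- exact: U1.
- move=> uj0 /eqP/(implyP c1)/existsP; apply.
  by exists j; apply/eqP.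
- by move: (ltn_ord l); rewrite ltnNge ltnW.
Qed.

Lemma outdeg_snoc u c : is_triword (snoc u c) ->
  outdeg (snoc u c) = outdeg u + ((c == 0 :> nat) || (c == 1 :> nat) && (0 < n)%N).
Proof.
move=> T; have Tu : is_triword u by move: T; rewrite triword_snoc => /andP[].
rewrite !outdegE // big_ord_lift_max snoc_max; congr addn.
by apply: eq_bigr => j _; rewrite snoc_lift lift_max.
Qed.

Lemma indeg_snoc u c : is_triword (snoc u c) ->
  indeg (snoc u c) = indeg u + (c == 2 :> nat) + ((c == 1 :> nat) && ~~ has_letter u 1).
Proof.
move=> T; have Tu : is_triword u by move: T; rewrite triword_snoc => /andP[].
rewrite !indegE // big_ord_lift_max /= snoc_max has_letter_snoc.
under eq_bigr do rewrite snoc_lift.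
case: (has_letter u 1); case: (c == 1 :> nat);
  by rewrite /= ?addn0 ?addn1 ?addnS ?addSn //= addnAC.
Qed.

End Snoc.

Lemma has_letter_nil (u : word 0) a : has_letter u a = false.
Proof. by apply/existsP => -[[]]. Qed.

Lemma triword_nil (u : word 0) : is_triword u.
Proof. by apply/is_triwordP; split=> -[]. Qed.

Lemma has_letter1_of_no0 n (u : word n.+1) :
  is_triword u -> ~~ has_letter u 0 -> has_letter u 1.
Proof.
case/is_triwordP => U0 _ /existsPn no0; apply/existsP; exists ord0.
by move: (U0 ord0 erefl) (no0 ord0); case: (ord3P (u ord0)) => ->.
Qed.

Section DegreePolynomial.
Variables (R : comNzRingType) (x y : R).
Local Open Scope ring_scope.

Definition weight n (u : word n) : R := x ^+ indeg u * y ^+ outdeg u.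

Lemma weight_snoc n (u : word n) c : is_triword (snoc u c) ->
  weight (snoc u c) =
  weight u * x ^+ ((c == 2 :> nat) + ((c == 1 :> nat) && ~~ has_letter u 1))
           * y ^+ ((c == 0 :> nat) || (c == 1 :> nat) && (0 < n)%N).
Proof. by move=> T; rewrite /weight indeg_snoc // outdeg_snoc // -addnA !exprD mulrACA mulrA. Qed.

Definition degpoly_no0 n := \sum_(u : word n | is_triword u && ~~ has_letter u 0) weight u.
Definition degpoly_has0 n := \sum_(u : word n | is_triword u && has_letter u 0) weight u.

Lemma degpoly_split n : degpoly n x y = degpoly_no0 n + degpoly_has0 n.
Proof. by rewrite /degpoly (bigID (fun u => has_letter u 0)) addrC. Qed.

Lemma degpoly_no0S n : degpoly_no0 n.+1 = (if n == 0%N then x else x + y) * degpoly_no0 n.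
Proof.
rewrite /degpoly_no0 big_mkcond big_snoc [in RHS]big_mkcond mulr_sumr; apply: eq_bigr => u _.
rewrite big_ord3 /= !has_letter_snoc /= ?orbT ?orbF ?andbF ?andbT add0r.
case: (boolP (has_letter u 0)) => [_|h0]; first by rewrite !andbF mulr0 addr0.
rewrite !andbT !triword_snoc h0 /= ?implybT ?andbT.
case Tu: (is_triword u) => /=; last by rewrite addr0 mulr0.
case: n u Tu h0 => [|m] u Tu h0 /=.
  rewrite addr0 weight_snoc ?triword_snoc ?Tu ?h0 // has_letter_nil.
  by rewrite expr1 expr0 mulr1 mulrC.
by rewrite !weight_snoc ?triword_snoc ?Tu ?h0 // has_letter1_of_no0 //=; ring.
Qed.

Lemma degpoly_has0S n : degpoly_has0 n.+1 = (x + y) * degpoly_has0 n + y * degpoly_no0 n.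
Proof.
rewrite /degpoly_has0 /degpoly_no0 big_mkcond big_snoc /= !mulr_sumr.
rewrite [X in _ = X + _]big_mkcond [X in _ = _ + X]big_mkcond -big_split /=.
apply: eq_bigr => u _.
rewrite big_ord3 /= !triword_snoc !has_letter_snoc /= ?orbT ?orbF ?andbT ?andbF ?implybT.
case Tu: (is_triword u) => /=; last by rewrite !addr0.
rewrite andNb addr0 weight_snoc ?triword_snoc ?Tu ?implybT //=.
case h0: (has_letter u 0); rewrite ?andbT ?andbF; last by rewrite addr0 add0r; ring.
have n_pos : (n == 0%N) = false by case: n u Tu h0 => // u; rewrite has_letter_nil.
by rewrite n_pos weight_snoc ?triword_snoc ?Tu ?n_pos ?implybT //=; ring.
Qed.

Lemma degpoly_no0_nil : degpoly_no0 0 = 1.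
Proof.
rewrite /degpoly_no0 (eq_bigl predT) => [|u]; last by rewrite triword_nil has_letter_nil.
rewrite (eq_bigr (fun _ => 1)) => [|u _]; last first.
  by rewrite /weight indegE ?outdegE ?triword_nil // !big_ord0 has_letter_nil mulr1.
by rewrite sumr_const card_ffun !card_ord.
Qed.

Lemma degpoly_has0_nil : degpoly_has0 0 = 0.
Proof. by rewrite /degpoly_has0 big_pred0 // => u; rewrite has_letter_nil andbF. Qed.

Lemma degpoly_no0_closed m : degpoly_no0 m.+1 = x * (x + y) ^+ m.
Proof.
elim: m => [|m IH]; first by rewrite degpoly_no0S degpoly_no0_nil mulr1.
by rewrite degpoly_no0S IH exprS /=; ring.
Qed.

Lemma degpoly1 : degpoly 1 x y = x + y.
Proof.
by rewrite degpoly_split degpoly_no0S degpoly_has0S degpoly_no0_nil degpoly_has0_nil /=; ring.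
Qed.

Lemma degpolySS m : degpoly m.+2 x y = (x + y) * degpoly m.+1 x y + x * y * (x + y) ^+ m.
Proof. by rewrite !degpoly_split degpoly_no0S degpoly_has0S degpoly_no0_closed /=; ring. Qed.

Lemma degpoly_closed m :
  degpoly m.+2 x y = (x + y) ^+ m * (x ^+ 2 + m.+3%:R * x * y + y ^+ 2).
Proof.
elim: m => [|m IH]; first by rewrite degpolySS degpoly1; ring.
by rewrite degpolySS IH [(x + y) ^+ m.+1]exprS; ring.
Qed.

End DegreePolynomial.

Local Open Scope ring_scope.

Theorem mainTheorem14 (R : comRingType) (n : nat) (x y : R) :
  (1 <= n)%N ->
  degpoly n x y =
  (if n == 1%N then x + y
   else (x + y) ^+ (n - 2) * (x ^+ 2 + (n.+1)%:R * x * y + y ^+ 2)).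
Proof.
case: n => [//|[_|m _]]; first exact: degpoly1.
by rewrite degpoly_closed !subSS subn0.
Qed.
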